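(* Under the assumptions below, with $\varrho=h^{2\alpha}$, let $y_{\varrho h}\in Y_h$ be the Galerkin solution, let $\widetilde{u}_{\varrho h}\in U_h$ be the unique solution of $\langle\widetilde{u}_{\varrho h},x_h\rangle_{X^*,X}=\langle By_{\varrho h},x_h\rangle_{X^*,X}$ for all $x_h\in X_h$, and let $\widetilde{y}_\varrho:=B^{-1}\widetilde{u}_{\varrho h}\in Y$. Then there is a constant $c>0$ independent of $h$ and $\overline{y}$ such that $$\|\widetilde{y}_\varrho-\overline{y}\|_{H_Y}\le c\,\|\overline{y}\|_{H_Y}\quad\text{for }\overline{y}\in H_Y,\qquad \|\widetilde{y}_\varrho-\overline{y}\|_{H_Y}\le c\,h^\alpha\|\overline{y}\|_Y\quad\text{for }\overline{y}\in Y.$$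
   Context: Abstract setting: Let $X\subset H_X\subset X^*$ and $Y\subset H_Y\subset Y^*$ be Gelfand triples of real Hilbert spaces, where the duality pairings $\langle\cdot,\cdot\rangle_{X^*,X}$ and $\langle\cdot,\cdot\rangle_{Y^*,Y}$ extend the inner products of $H_X$, $H_Y$. Let $B:Y\to X^*$ be a bounded linear isomorphism with adjoint $B^*:X\to Y^*$, $\langle By,x\rangle_{X^*,X}=\langle y,B^*x\rangle_{Y,Y^*}$. Let $D:Y\to Y^*$ be bounded, linear, self-adjoint and elliptic, $\|y\|_D:=\langle Dy,y\rangle_{Y^*,Y}^{1/2}$ (an equivalent norm on $Y$). Given $\overline{y}\in H_Y$ and $\varrho>0$, $y_\varrho\in Y$ is the unique solution of $\langle y_\varrho,y\rangle_{H_Y}+\varrho\langle Dy_\varrho,y\rangle_{Y^*,Y}=\langle\overline{y},y\rangle_{H_Y}$ for all $y\in Y$. Discretization: for each $h\in(0,h_0]$, $Y_h\subset Y$ is finite-dimensional and there are maps $P_h:Y\to Y_h$, $\alpha>0$ and $c_1,c_2>0$ independent of $h$ with $\|y-P_hy\|_{H_Y}\le c_1h^\alpha\|y\|_D$ and $\|y-P_hy\|_D\le c_2\|y\|_D$ for all $y\in Y$; $y_{\varrho h}\in Y_h$ satisfies $\langle y_{\varrho h},y_h\rangle_{H_Y}+\varrho\langle Dy_{\varrho h},y_h\rangle_{Y^*,Y}=\langle\overline{y},y_h\rangle_{H_Y}$ for all $y_h\in Y_h$. Further, $U_h\subset X^*$ and $X_h\subset X$ are finite-dimensional subspaces with $\dim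 U_h=\dim X_h$, satisfying the discrete inf-sup condition $c_S\|u_h\|_{X^*}\le\sup_{0\ne x_h\in X_h}\langle u_h,x_h\rangle_{X^*,X}/\|x_h\|_X$ for all $u_h\in U_h$ with $c_S>0$ independent of $h$, and there are maps $\Pi_h:X\to X_h$ with $\|x-\Pi_hx\|_X\le c\,h^\alpha\|B^*x\|_{H_Y}$ for all $x\in X$ with $B^*x\in H_Y$, $c$ independent of $h$. *)

From HB Require Import structures.
From mathcomp Require Import all_boot all_order all_algebra.
From mathcomp Require Import all_classical all_reals all_analysis.
Set Implicit Arguments. Unset Strict Implicit. Unset Printing Implicit Defensive.
Import Order.TTheory GRing.Theory Num.Theory.
Local Open Scope classical_set_scope.
Local Open Scope ring_scope.

Section Defs.
Variable R : realType.

Section Hilbert.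
Variable V : lmodType R.
Variable ip : V -> V -> R.

Definition is_inner_product : Prop :=
  [/\ (forall x y, ip x y = ip y x),
      (forall a x y z, ip (a *: x + y) z = a * ip x z + ip y z),
      (forall x, 0 <= ip x x) &
      (forall x, ip x x = 0 -> x = 0)].

Definition hnorm (x : V) : R := Num.sqrt (ip x x).

Definition hcomplete : Prop :=
  forall u : nat -> V,
    (forall e : R, 0 < e -> exists N : nat, forall m n : nat,
        (N <= m)%N -> (N <= n)%N -> hnorm (u m - u n) < e) ->
    exists l : V, forall e : R, 0 < e -> exists N : nat, forall n : nat,
        (N <= n)%N -> hnorm (u n - l) < e.

Definition is_hilbert : Prop := is_inner_product /\ hcomplete.

Definition bounded_linear_functional (f : V -> R) : Prop :=
  (forall a x y, f (a *: x + y) = a * f x + f y) /\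
  exists C : R, forall x, `|f x| <= C * hnorm x.

Definition dual_norm (f : V -> R) : R :=
  sup [set r | exists x : V, x != 0 /\ r = `|f x| / hnorm x].

Definition subspace_dim (S : set V) (n : nat) : Prop :=
  exists b : 'I_n -> V,
    S = [set v | exists a : 'I_n -> R, v = \sum_(i < n) a i *: b i] /\
    (forall a : 'I_n -> R, \sum_(i < n) a i *: b i = 0 -> forall i, a i = 0).

Definition fun_subspace_dim (S : set (V -> R)) (n : nat) : Prop :=
  exists b : 'I_n -> (V -> R),
    S = [set f | exists a : 'I_n -> R, forall x, f x = \sum_(i < n) a i * b i x] /\
    (forall a : 'I_n -> R, (forall x, \sum_(i < n) a i * b i x = 0) ->
       forall i, a i = 0).
End Hilbert.

(* Gelfand triple  V ⊂ H ⊂ V^* : V is continuously and densely embedded in H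
   via the injective linear map i; H is identified with its dual, and
   h ∈ H acts on V by  x |-> ipH h (i x)  (so the duality pairing extends the
   inner product of H). *)
Definition gelfand_triple (V H : lmodType R) (ipV : V -> V -> R)
    (ipH : H -> H -> R) (i : V -> H) : Prop :=
  [/\ is_hilbert ipV /\ is_hilbert ipH,
      (forall a x y, i (a *: x + y) = a *: i x + i y),
      injective i,
      (exists C : R, forall x, hnorm ipH (i x) <= C * hnorm ipV x) &
      (forall h : H, forall e : R, 0 < e -> exists x : V, hnorm ipH (i x - h) < e)].

Definition bounded_iso_to_dual (Y X : lmodType R) (ipY : Y -> Y -> R)
    (ipX : X -> X -> R) (B : Y -> X -> R) : Prop :=
  [/\ (forall y, bounded_linear_functional ipX (B y)) /\
      (forall a y z x, B (a *: y + z) x = a * B y x + B z x),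
      (exists C : R, forall y, dual_norm ipX (B y) <= C * hnorm ipY y),
      (exists c : R, 0 < c /\ forall y, c * hnorm ipY y <= dual_norm ipX (B y)),
      injective B &
      (forall f, bounded_linear_functional ipX f -> exists y, forall x, f x = B y x)].

(* D : Y -> Y^*, written as the bilinear form d y z = <D y, z>:
   bounded, linear, self-adjoint and elliptic *)
Definition sym_elliptic_form (Y : lmodType R) (ipY : Y -> Y -> R)
    (d : Y -> Y -> R) : Prop :=
  [/\ (forall a x y z, d (a *: x + y) z = a * d x z + d y z),
      (forall y z, d y z = d z y),
      (exists C : R, forall y z, `|d y z| <= C * hnorm ipY y * hnorm ipY z) &
      (exists c : R, 0 < c /\ forall y, c * hnorm ipY y ^+ 2 <= d y y)].

Definition Dnorm (Y : lmodType R) (d : Y -> Y -> R) (y : Y) : R := Num.sqrt (d y y).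

End Defs.

From HB Require Import structures.
From mathcomp Require Import all_boot all_order all_algebra.
From mathcomp Require Import all_classical all_reals all_analysis.
From mathcomp Require Import ring lra.
Import Order.TTheory GRing.Theory Num.Theory.
Local Open Scope classical_set_scope.
Local Open Scope ring_scope.
Set Implicit Arguments. Unset Strict Implicit. Unset Printing Implicit Defensive.

(* Split [y~ - ybar = (y~ - y_rh) + (y_rh - ybar)], with [y_rh] the Galerkin solution.
   Testing the Galerkin equation with [y_rh] gives [||y_rh||_H <= ||ybar||_H] and, as
   [rho = h^(2 alpha)], [h^alpha ||y_rh||_Y <~ ||ybar||_H]; for [ybar] in [Y], testing the
   error equation with [y_rh - P_h ybar] gives [||y_rh - ybar||_H <~ h^alpha ||ybar||_Y].
   The perturbation [w = y~ - y_rh] satisfies [<B w, x_h> = 0] on [X_h]: the discrete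
   inf-sup condition gives [||y~||_Y <~ ||y_rh||_Y], and an Aubin-Nitsche duality argument
   (solve [B^* x = (w, .)_H], whose solution [Pi_h] approximates to order [h^alpha]) gives
   [||w||_H <~ h^alpha ||w||_Y]. The adjoint problem is solved with the Riesz representation
   theorem, proved by projecting onto the kernel of a functional. *)

Section RealBounds.
Variable R : realDomainType.

Lemma le_of_sqr_le_mul (a b : R) : 0 <= a -> 0 <= b -> a ^+ 2 <= a * b -> a <= b.
Proof. by move=> a0 b0; rewrite expr2; nra. Qed.

Lemma le_of_sqr_le_scale (x y k : R) : 0 <= x -> 0 <= y -> 0 <= k ->
  x ^+ 2 <= k * y ^+ 2 -> x <= (k + 1) * y.
Proof.
move=> x0 y0 k0 xy; rewrite -(ler_pXn2r (n := 2)) ?nnegrE ?mulr_ge0 ?addr_ge0 //.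
by apply: le_trans xy _; rewrite exprMn ler_wpM2r ?exprn_ge0 //; nra.
Qed.

(* Young's inequality on both cross terms absorbs them into the left-hand side. *)
Lemma energy_absorb (A E Z s c1 c2 : R) : 0 <= c2 -> 0 <= E -> 0 <= Z ->
  A ^+ 2 + s ^+ 2 * E ^+ 2 <= A * (c1 * s * Z) + s ^+ 2 * ((c2 + 1) * E * Z + c2 * Z ^+ 2) ->
  A ^+ 2 + s ^+ 2 * E ^+ 2 <= (c1 ^+ 2 + (c2 + 1) ^+ 2 + 2 * c2) * (s * Z) ^+ 2.
Proof.
move=> c20 E0 Z0 AE.
have := sqr_ge0 (A - c1 * s * Z); have := mulr_ge0 (sqr_ge0 s) (sqr_ge0 (E - (c2 + 1) * Z)).
rewrite exprMn; nra.
Qed.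

Lemma nonneg_bound (T : Type) (F G : T -> R) : (forall t, 0 <= G t) ->
  (exists C, forall t, F t <= C * G t) -> exists2 C, 0 <= C & forall t, F t <= C * G t.
Proof.
move=> G0 [C FC]; exists `|C| => // t; apply: le_trans (FC t) _.
by rewrite ler_wpM2r ?ler_norm.
Qed.

End RealBounds.

Lemma sup_le_ge0 (R : realType) (E : set R) (M : R) : 0 <= M -> ubound E M -> sup E <= M.
Proof.
move=> M0 EM; have [E0|/set0P/negP/negPn/eqP ->] := pselect (E !=set0).
  exact: ge_sup.
by rewrite sup0.
Qed.

Section InnerProduct.
Variables (R : realType) (V : lmodType R) (ip : V -> V -> R).
Hypothesis ipP : is_inner_product ip.

Lemma ipC x y : ip x y = ip y x.
Proof. by case: ipP. Qed.

Lemma ipDl x y z : ip (x + y) z = ip x z + ip y z.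
Proof. by case: ipP => _ ipl _ _; have := ipl 1 x y z; rewrite scale1r mul1r. Qed.

Lemma ip0l z : ip 0 z = 0.
Proof. by have := ipDl 0 0 z; rewrite addr0 => /eqP; rewrite -subr_eq subrr eq_sym => /eqP. Qed.

Lemma ipZl a x z : ip (a *: x) z = a * ip x z.
Proof. by case: ipP => _ ipl _ _; rewrite -[a *: x]addr0 ipl ip0l addr0. Qed.

Lemma ipNl x z : ip (- x) z = - ip x z.
Proof. by rewrite -scaleN1r ipZl mulN1r. Qed.

Lemma ipBl x y z : ip (x - y) z = ip x z - ip y z.
Proof. by rewrite ipDl ipNl. Qed.

Lemma ipDr x y z : ip z (x + y) = ip z x + ip z y.
Proof. by rewrite !(ipC z) ipDl. Qed.

Lemma ipZr a x z : ip z (a *: x) = a * ip z x.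
Proof. by rewrite !(ipC z) ipZl. Qed.

Lemma ipNr x z : ip z (- x) = - ip z x.
Proof. by rewrite !(ipC z) ipNl. Qed.

Lemma ipBr x y z : ip z (x - y) = ip z x - ip z y.
Proof. by rewrite ipDr ipNr. Qed.

Lemma ipxx_ge0 x : 0 <= ip x x.
Proof. by case: ipP. Qed.

Lemma hnorm_ge0 x : 0 <= hnorm ip x.
Proof. exact: sqrtr_ge0. Qed.

Lemma hnorm_sqr x : hnorm ip x ^+ 2 = ip x x.
Proof. by rewrite sqr_sqrtr // ipxx_ge0. Qed.

Lemma hnorm_gt0 x : x != 0 -> 0 < hnorm ip x.
Proof.
case: ipP => _ _ _ ip_eq0 /eqP x0; rewrite lt0r hnorm_ge0 andbT.
by apply/eqP => hx0; apply/x0/ip_eq0; rewrite -hnorm_sqr hx0 expr0n.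
Qed.

Lemma cauchy_schwarz x y : `|ip x y| <= hnorm ip x * hnorm ip y.
Proof.
rewrite -sqrtrM ?ipxx_ge0 // -sqrtr_sqr ler_sqrt ?mulr_ge0 ?ipxx_ge0 //.
have [xx0|xx_neq0] := eqVneq (ip x x) 0.
  by case: ipP => _ _ _ /(_ _ xx0) ->; rewrite !ip0l expr0n mul0r.
have xx_gt0 : 0 < ip x x by rewrite lt0r xx_neq0 ipxx_ge0.
(* evaluate [t |-> ip (t *: x + y) (t *: x + y)] at its minimiser *)
have := ipxx_ge0 ((- (ip x y / ip x x)) *: x + y).
rewrite !(ipDl, ipDr, ipZl, ipZr) (ipC y x).
have -> : - (ip x y / ip x x) * (- (ip x y / ip x x) * ip x x) +
  - (ip x y / ip x x) * ip x y + (- (ip x y / ip x x) * ip x y + ip y y) =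
  (ip x x * ip y y - ip x y ^+ 2) / ip x x by field.
by rewrite pmulr_lge0 ?invr_gt0 // subr_ge0.
Qed.

Lemma hnormN x : hnorm ip (- x) = hnorm ip x.
Proof. by rewrite /hnorm ipNl ipNr opprK. Qed.

Lemma hnormD x y : hnorm ip (x + y) <= hnorm ip x + hnorm ip y.
Proof.
rewrite -(ler_pXn2r (n := 2)) ?nnegrE ?addr_ge0 ?hnorm_ge0 //.
rewrite hnorm_sqr ipDl !ipDr (ipC y x) -!hnorm_sqr sqrrD.
have := ler_norm (ip x y); have := cauchy_schwarz x y; lra.
Qed.

Lemma hnormB x y : hnorm ip (x - y) <= hnorm ip x + hnorm ip y.
Proof. by rewrite -(hnormN y) hnormD. Qed.

End InnerProduct.

Section ScalarLinear.
Variables (R : realType) (V : lmodType R) (f : V -> R).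
Hypothesis f_lin : forall a x y, f (a *: x + y) = a * f x + f y.

Lemma lfun0 : f 0 = 0.
Proof. by have := f_lin 1 0 0; rewrite scaler0 addr0 mul1r => /eqP; rewrite -subr_eq subrr eq_sym => /eqP. Qed.

Lemma lfunD x y : f (x + y) = f x + f y.
Proof. by have := f_lin 1 x y; rewrite scale1r mul1r. Qed.

Lemma lfunZ a x : f (a *: x) = a * f x.
Proof. by rewrite -[a *: x]addr0 f_lin lfun0 addr0. Qed.

Lemma lfunB x y : f (x - y) = f x - f y.
Proof. by rewrite lfunD -scaleN1r lfunZ mulN1r. Qed.

End ScalarLinear.

Lemma lmapB (R : realType) (V W : lmodType R) (g : V -> W) :
  (forall a x y, g (a *: x + y) = a *: g x + g y) -> forall x y, g (x - y) = g x - g y.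
Proof. by move=> g_lin x y; rewrite addrC -scaleN1r g_lin scaleN1r addrC. Qed.

Section DualNorm.
Variables (R : realType) (V : lmodType R) (ip : V -> V -> R).

Lemma dual_norm_le (f : V -> R) (M : R) :
  0 <= M -> (forall x, `|f x| <= M * hnorm ip x) -> dual_norm ip f <= M.
Proof.
move=> M0 fM; apply: sup_le_ge0 => // _ [x [_ ->]].
have [->|hx_neq0] := eqVneq (hnorm ip x) 0; first by rewrite invr0 mulr0.
by rewrite ler_pdivrMr // lt0r hx_neq0 hnorm_ge0.
Qed.

Hypothesis ipP : is_inner_product ip.
Variable f : V -> R.
Hypothesis fP : bounded_linear_functional ip f.

Lemma dual_norm_ub x : x != 0 -> `|f x| / hnorm ip x <= dual_norm ip f.
Proof.
move=> x0; case: fP => _ [C fC]; apply: ub_le_sup; last by exists x.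
by exists C => _ [y [y0 ->]]; rewrite ler_pdivrMr ?hnorm_gt0.
Qed.

Lemma ler_dual_norm x : `|f x| <= dual_norm ip f * hnorm ip x.
Proof.
have [->|x0] := eqVneq x 0; first by rewrite (lfun0 fP.1) normr0 /hnorm ip0l // sqrtr0 mulr0.
by rewrite -ler_pdivrMr ?hnorm_gt0 ?dual_norm_ub.
Qed.

Lemma dual_norm_ge0 : 0 <= dual_norm ip f.
Proof.
have [[x x0]|V0] := pselect (exists x : V, x != 0).
  by apply: le_trans (dual_norm_ub x0); rewrite divr_ge0 ?hnorm_ge0.
rewrite /dual_norm (_ : [set r | _] = set0) ?sup0 //.
by apply/seteqP; split => // r [x [x0 _]]; apply: V0; exists x.
Qed.

End DualNorm.

Section Riesz.
Variables (R : realType) (V : lmodType R) (ip : V -> V -> R).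
Hypothesis ipP : is_inner_product ip.

Definition hconverges (u : nat -> V) (l : V) : Prop :=
  forall e : R, 0 < e -> exists N : nat, forall n, (N <= n)%N -> hnorm ip (u n - l) < e.

Lemma ip_dist_limit_le (u : nat -> V) (l v : V) (d : R) : 0 <= d -> hconverges u l ->
  (forall k, ip (v - u k) (v - u k) < d + k.+1%:R^-1) -> ip (v - l) (v - l) <= d.
Proof.
move=> d0 ul u_near; rewrite -(hnorm_sqr ipP) -(sqr_sqrtr d0).
rewrite ler_pXn2r ?nnegrE ?hnorm_ge0 ?sqrtr_ge0 //.
apply/ler_addgt0Pr => e e0.
have [N uN] := ul _ (divr_gt0 e0 (ltr0n _ 2)).
have [K _ KN] := near_infty_natSinv_lt (PosNum (divr_gt0 (exprn_gt0 2 e0) (ltr0n _ 4))).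
pose k := maxn N K.
have ukl := uN k (leq_maxl _ _).
have vuk : hnorm ip (v - u k) <= Num.sqrt d + e / 2.
  rewrite -(ler_pXn2r (n := 2)) ?nnegrE ?hnorm_ge0 ?addr_ge0 ?sqrtr_ge0 ?divr_ge0 ?(ltW e0) //.
  rewrite (hnorm_sqr ipP) sqrrD sqr_sqrtr //.
  have := KN k (leq_maxr _ _); have := u_near k; have := sqrtr_ge0 d.
  have := mulr_ge0 (sqrtr_ge0 d) (ltW e0); rewrite mulr2n /=; set eps := (k.+1%:R)^-1.
  have : (e / 2) ^+ 2 = e ^+ 2 / 4 by field.
  lra.
have -> : v - l = (v - u k) + (u k - l) by rewrite addrA subrK.
by apply: le_trans (hnormD ipP _ _) _; lra.
Qed.

Variable f : V -> R.
Hypothesis fP : bounded_linear_functional ip f.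

Lemma ker_closed (u : nat -> V) (l : V) :
  (forall n, f (u n) = 0) -> hconverges u l -> f l = 0.
Proof.
case: fP => f_lin [C fC] fu ul; apply/eqP; rewrite -normr_le0.
apply/ler_addgt0Pr => e e0; rewrite add0r.
have C1 : 0 < `|C| + 1 by rewrite ltr_pwDr.
have [N uN] := ul _ (divr_gt0 e0 C1).
have := uN N (leqnn N); rewrite ltr_pdivlMr // => hN.
have := fC (u N - l); rewrite lfunB // fu sub0r normrN.
have := ler_norm C; have := hnorm_ge0 ip (u N - l); nra.
Qed.

Lemma ker_dist_cauchy v d a b : (forall n, f n = 0 -> d <= ip (v - n) (v - n)) ->
  f a = 0 -> f b = 0 ->
  ip (a - b) (a - b) <= 2 * (ip (v - a) (v - a) - d) + 2 * (ip (v - b) (v - b) - d).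
Proof.
case: fP => f_lin _ d_lb fa fb.
(* parallelogram law, with the midpoint of [a, b] lying in the kernel *)
have mid0 : f (2^-1 *: (a + b)) = 0 by rewrite lfunZ // lfunD // fa fb addr0 mulr0.
have := d_lb _ mid0.
rewrite !(ipDl ipP, ipDr ipP, ipNl ipP, ipNr ipP, ipZl ipP, ipZr ipP).
rewrite (ipC ipP a v) (ipC ipP b v) (ipC ipP b a); lra.
Qed.

Lemma ker_projection v : hcomplete ip ->
  exists2 l, f l = 0 & forall n, f n = 0 -> ip (v - l) (v - l) <= ip (v - n) (v - n).
Proof.
move=> ipc; pose D := [set t | exists n, f n = 0 /\ t = ip (v - n) (v - n)].
have D_lb : has_lbound D by exists 0 => _ [n [_ ->]]; apply: ipxx_ge0.
have D0 : D (ip (v - 0) (v - 0)) by exists 0; rewrite (lfun0 fP.1).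
have d_lb n : f n = 0 -> inf D <= ip (v - n) (v - n).
  by move=> fn; apply: ge_inf D_lb _ _; exists n.
have d0 : 0 <= inf D.
  by apply: lb_le_inf; [exists (ip (v - 0) (v - 0)) | move=> _ [n [_ ->]]; apply: ipxx_ge0].
have /choice[u /all_and2[fu u_near]] : forall k : nat, exists n,
    f n = 0 /\ ip (v - n) (v - n) < inf D + k.+1%:R^-1.
  move=> k; have k_gt0 : 0 < (k.+1%:R : R)^-1 by rewrite invr_gt0.
  have [_ [n [fn ->]] hn] := inf_adherent k_gt0 (conj (ex_intro _ _ D0) D_lb).
  by exists n.
have [l ul] : exists l, hconverges u l.
  apply: ipc => e e0.
  have [K _ KN] := near_infty_natSinv_lt (PosNum (divr_gt0 (exprn_gt0 2 e0) (ltr0n _ 4))).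
  exists K => m n Km Kn; rewrite -(ltr_pXn2r (n := 2)) ?nnegrE ?hnorm_ge0 ?(ltW e0) //.
  have := ker_dist_cauchy d_lb (fu m) (fu n); rewrite -(hnorm_sqr ipP).
  have := KN m Km; have := KN n Kn; have := u_near m; have := u_near n; rewrite /=.
  set em := (m.+1%:R)^-1; set en := (n.+1%:R)^-1; lra.
exists l; first exact: ker_closed fu ul.
by move=> n fn; apply: le_trans (d_lb n fn); apply: ip_dist_limit_le d0 ul u_near.
Qed.

Lemma ker_projection_orthogonal v l : f l = 0 ->
  (forall n, f n = 0 -> ip (v - l) (v - l) <= ip (v - n) (v - n)) ->
  forall w, f w = 0 -> ip (v - l) w = 0.
Proof.
case: fP => f_lin _ fl l_min w fw.
have key t : 0 <= t * t * ip w w - 2 * t * ip (v - l) w.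
  have := l_min (l + t *: w); rewrite lfunD // lfunZ // fl fw mulr0 addr0 => /(_ erefl).
  rewrite opprD addrA !(ipDl ipP, ipDr ipP, ipNl ipP, ipNr ipP, ipZl ipP, ipZr ipP).
  by rewrite (ipC ipP w v) (ipC ipP w l); lra.
have W0 := ipxx_ge0 ipP w.
set b := ip (v - l) w in key *; set W := ip w w in key W0.
have := key (b / (W + 1)).
have -> : b / (W + 1) * (b / (W + 1)) * W - 2 * (b / (W + 1)) * b =
    - (b ^+ 2 * (W + 2)) / (W + 1) ^+ 2 by field; rewrite gt_eqF // ltr_pwDr.
rewrite pmulr_lge0 ?invr_gt0 ?exprn_gt0 ?ltr_pwDr // oppr_ge0 => b2W.
apply/eqP; rewrite -sqrf_eq0 eq_le sqr_ge0 andbT.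
by rewrite -(pmulr_lle0 _ (_ : 0 < W + 2)) // ltr_pwDr.
Qed.

Lemma riesz_of_orthogonal u : f u != 0 -> (forall w, f w = 0 -> ip u w = 0) ->
  forall x, f x = ip ((f u / ip u u) *: u) x.
Proof.
case: fP => f_lin _ fu u_orth x.
have uu0 : ip u u != 0.
  by apply: contraNneq fu; case: ipP => _ _ _ /[apply] ->; rewrite lfun0.
have := u_orth (x - (f x / f u) *: u); rewrite lfunB // lfunZ // divfK // subrr.
rewrite (ipBr ipP) (ipZr ipP) (ipZl ipP) => /(_ erefl) /eqP; rewrite subr_eq0 => /eqP ->.
by field; rewrite fu uu0.
Qed.

Lemma riesz_representation : hcomplete ip -> exists r, forall x, f x = ip r x.
Proof.
move=> ipc; have [[v fv]|f0] := pselect (exists v, f v != 0); last first.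
  exists 0 => x; rewrite (ip0l ipP); apply/eqP; apply/negPn/negP => fx.
  by apply: f0; exists x.
have [l fl l_min] := ker_projection v ipc.
have fvl : f (v - l) != 0 by rewrite (lfunB fP.1) fl subr0.
exists ((f (v - l) / ip (v - l) (v - l)) *: (v - l)).
by apply: riesz_of_orthogonal fvl (ker_projection_orthogonal fl l_min).
Qed.

End Riesz.

Section Adjoint.
Variables (R : realType) (X Y : lmodType R) (ipX : X -> X -> R) (ipY : Y -> Y -> R).
Variable B : Y -> X -> R.
Hypotheses (ipXP : is_hilbert ipX) (BP : bounded_iso_to_dual ipY ipX B).

(* [fun y => B y x] is [B^* x]: the adjoint of [B] maps onto [Y^*]. *)
Lemma adjoint_surj (phi : Y -> R) : bounded_linear_functional ipY phi ->
  exists x, forall y, B y x = phi y.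
Proof.
have ipXi := ipXP.1.
case: BP => -[B_blf B_lin] _ [cB [cB0 cB_le]] B_inj B_surj [phi_lin [C phiC]].
have ipX_blf x' : bounded_linear_functional ipX (ipX x').
  split; first by move=> a x y; rewrite (ipDr ipXi) (ipZr ipXi).
  by exists (hnorm ipX x') => x; exact: (cauchy_schwarz ipXi x' x).
(* [T] is the inverse of the Riesz map composed with [B] *)
have /choice[T BT] : forall x', exists y, B y = ipX x'.
  by move=> x'; have [y By] := B_surj _ (ipX_blf x'); exists y; apply: funext => x.
have T_lin a x1 x2 : T (a *: x1 + x2) = a *: T x1 + T x2.
  by apply: B_inj; apply: funext => x; rewrite B_lin !BT (ipDl ipXi) (ipZl ipXi).
have T_le x' : hnorm ipY (T x') <= cB^-1 * hnorm ipX x'.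
  rewrite mulrC ler_pdivlMr // mulrC; apply: le_trans (cB_le _) _; rewrite BT.
  by apply: dual_norm_le; [exact: hnorm_ge0 | move=> x; exact: (cauchy_schwarz ipXi _ x)].
have phiT_blf : bounded_linear_functional ipX (phi \o T).
  split; first by move=> a x1 x2; rewrite /= T_lin phi_lin.
  exists (`|C| * cB^-1) => x'; apply: le_trans (phiC _) _.
  apply: le_trans (ler_wpM2r (hnorm_ge0 _ _) (ler_norm C)) _.
  by rewrite -mulrA ler_wpM2l.
have [x phiT] := riesz_representation ipXi phiT_blf ipXP.2.
exists x => y; have [r Br] := riesz_representation ipXi (B_blf y) ipXP.2.
have -> : y = T r by apply: B_inj; apply: funext => z; rewrite BT Br.
by rewrite BT (ipC ipXi) -phiT.
Qed.

End Adjoint.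

Lemma sym_elliptic_inner_product (R : realType) (Y : lmodType R) (ipY d : Y -> Y -> R) :
  is_inner_product ipY -> sym_elliptic_form ipY d -> is_inner_product d.
Proof.
move=> ipYP [d_lin d_sym _ [ce [ce_gt0 d_ge]]]; split => // y.
  by apply: le_trans (d_ge y); rewrite mulr_ge0 ?sqr_ge0 ?ltW.
move=> dy0; apply/eqP; apply: contraLR (d_ge y) => /(hnorm_gt0 ipYP) y_gt0.
by rewrite dy0 -ltNge mulr_gt0 ?exprn_gt0.
Qed.

Lemma sym_elliptic_bound (R : realType) (Y : lmodType R) (ipY d : Y -> Y -> R) :
  sym_elliptic_form ipY d -> exists2 Cd, 0 <= Cd & forall y, d y y <= Cd * hnorm ipY y ^+ 2.
Proof.
case=> _ _ [C d_le] _; apply: nonneg_bound => [y|]; first exact: sqr_ge0.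
by exists C => y; apply: le_trans (ler_norm _) _; rewrite mulrA d_le.
Qed.

Definition restricted_dual_norm (R : realType) (V : lmodType R) (ip : V -> V -> R)
    (S : set V) (u : V -> R) : R :=
  sup [set r | exists x, S x /\ x != 0 /\ r = u x / hnorm ip x].

Lemma restricted_dual_norm_le (R : realType) (V : lmodType R) (ip : V -> V -> R)
    (S : set V) (u f : V -> R) :
  is_inner_product ip -> bounded_linear_functional ip f ->
  (forall x, S x -> u x = f x) -> restricted_dual_norm ip S u <= dual_norm ip f.
Proof.
move=> ipP fP uf; apply: sup_le_ge0; first exact: dual_norm_ge0.
move=> _ [x [Sx [x0 ->]]]; rewrite uf //.
by apply: le_trans (dual_norm_ub ipP fP x0); rewrite ler_pM2r ?invr_gt0 ?hnorm_gt0 ?ler_norm.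
Qed.

Section ErrorAnalysis.
Variables (R : realType) (X Y HY : lmodType R).
Variables (ipX : X -> X -> R) (ipY : Y -> Y -> R) (ipHY : HY -> HY -> R).
Variables (iY : Y -> HY) (B : Y -> X -> R) (d : Y -> Y -> R).
Hypotheses (ipXP : is_hilbert ipX) (ipYP : is_inner_product ipY).
Hypotheses (ipHYP : is_inner_product ipHY) (dP : is_inner_product d).
Hypothesis iY_lin : forall a x y, iY (a *: x + y) = a *: iY x + iY y.
Hypothesis iY_bounded : exists C, forall y, hnorm ipHY (iY y) <= C * hnorm ipY y.
Hypothesis BP : bounded_iso_to_dual ipY ipX B.
Variables (CB cB Cd ce : R).
Hypotheses (CB_ge0 : 0 <= CB) (cB_gt0 : 0 < cB) (Cd_ge0 : 0 <= Cd) (ce_gt0 : 0 < ce).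
Hypothesis B_le : forall y, dual_norm ipX (B y) <= CB * hnorm ipY y.
Hypothesis B_ge : forall y, cB * hnorm ipY y <= dual_norm ipX (B y).
Hypothesis d_le : forall y, d y y <= Cd * hnorm ipY y ^+ 2.
Hypothesis d_ge : forall y, ce * hnorm ipY y ^+ 2 <= d y y.

Let iYB := lmapB iY_lin.

Lemma hnorm_le_Dnorm y : hnorm ipY y <= (ce^-1 + 1) * Dnorm d y.
Proof.
apply: le_of_sqr_le_scale; rewrite ?hnorm_ge0 ?sqrtr_ge0 ?invr_ge0 ?(ltW ce_gt0) //.
by rewrite -[Dnorm d y]/(hnorm d y) (hnorm_sqr dP) ler_pdivlMl // d_ge.
Qed.

Lemma Dnorm_le_hnorm y : Dnorm d y <= (Cd + 1) * hnorm ipY y.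
Proof.
apply: le_of_sqr_le_scale; rewrite ?hnorm_ge0 ?sqrtr_ge0 //.
by rewrite -[Dnorm d y]/(hnorm d y) (hnorm_sqr dP) d_le.
Qed.

Definition galerkin_solution (Yh : set Y) (rho : R) (ybar : HY) (y : Y) : Prop :=
  Yh y /\ forall yh, Yh yh -> ipHY (iY y) (iY yh) + rho * d y yh = ipHY ybar (iY yh).

Lemma galerkin_stable Yh rho ybar y : 0 <= rho -> galerkin_solution Yh rho ybar y ->
  hnorm ipHY (iY y) <= hnorm ipHY ybar /\ rho * d y y <= hnorm ipHY ybar ^+ 2.
Proof.
move=> rho0 [Yy y_gal]; have := y_gal y Yy; rewrite -(hnorm_sqr ipHYP) => energy.
have cs := le_trans (ler_norm _) (cauchy_schwarz ipHYP ybar (iY y)).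
have rd0 := mulr_ge0 rho0 (ipxx_ge0 dP y).
have := hnorm_ge0 ipHY (iY y); have := hnorm_ge0 ipHY ybar.
by split; [apply: le_of_sqr_le_mul | ]; nra.
Qed.

Lemma galerkin_orthogonality Yh rho z y w : galerkin_solution Yh rho (iY z) y -> Yh w ->
  ipHY (iY (y - z)) (iY w) + rho * d (y - z) w = - (rho * d z w).
Proof.
move=> [_ y_gal] Yw; have := y_gal w Yw.
by rewrite iYB (ipBl ipHYP) (ipBl dP); lra.
Qed.

(* the error equation tested with [y - Pz = (y - z) + (z - Pz)] *)
Lemma galerkin_error_identity Yh rho z y Pz :
  galerkin_solution Yh rho (iY z) y -> Yh Pz ->
  ipHY (iY (y - z)) (iY (y - z)) + rho * d (y - z) (y - z) =
  - ipHY (iY (y - z)) (iY (z - Pz)) - rho * (d (y - z) (z - Pz) + d z (y - z) + d z (z - Pz)).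
Proof.
move=> y_gal YPz; have [Yy _] := y_gal.
have := galerkin_orthogonality y_gal Yy; have := galerkin_orthogonality y_gal YPz.
rewrite !iYB !(ipBl ipHYP, ipBr ipHYP, ipBl dP, ipBr dP).
have := ipC ipHYP (iY y) (iY z); have := ipC ipHYP (iY y) (iY Pz).
have := ipC ipHYP (iY z) (iY Pz); have := ipC dP y z; have := ipC dP y Pz.
have := ipC dP z Pz; lra.
Qed.

Lemma galerkin_error Yh s z y Pz (c1 c2 : R) : 0 < s -> 0 <= c2 ->
  galerkin_solution Yh (s ^+ 2) (iY z) y -> Yh Pz ->
  hnorm ipHY (iY (z - Pz)) <= c1 * s * Dnorm d z -> Dnorm d (z - Pz) <= c2 * Dnorm d z ->
  let kappa := c1 ^+ 2 + (c2 + 1) ^+ 2 + 2 * c2 in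
  hnorm ipHY (iY (y - z)) <= (kappa + 1) * (s * Dnorm d z) /\
  Dnorm d (y - z) <= (kappa + 1) * Dnorm d z.
Proof.
move=> s0 c20 y_gal YPz Pz_H Pz_D kappa.
have energy := galerkin_error_identity y_gal YPz.
change (is_true (hnorm ipHY (iY (z - Pz)) <= c1 * s * hnorm d z)) in Pz_H.
change (is_true (hnorm d (z - Pz) <= c2 * hnorm d z)) in Pz_D.
change (hnorm ipHY (iY (y - z)) <= (kappa + 1) * (s * hnorm d z) /\
  hnorm d (y - z) <= (kappa + 1) * hnorm d z).
set e := y - z in energy *; set q := z - Pz in energy Pz_H Pz_D.
rewrite -(hnorm_sqr ipHYP) -(hnorm_sqr dP) in energy; move: energy Pz_H Pz_D.
have := cauchy_schwarz ipHYP (iY e) (iY q); have := cauchy_schwarz dP e q.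
have := cauchy_schwarz dP z e; have := cauchy_schwarz dP z q.
rewrite ![`|_| <= _]ler_norml.
set A := hnorm ipHY (iY e); set E := hnorm d e; set Z := hnorm d z.
set Qh := hnorm ipHY (iY q); set Qd := hnorm d q.
move=> /andP[cs4 _] /andP[cs3 _] /andP[cs2 _] /andP[cs1 _] energy Qh_le Qd_le.
have A0 : 0 <= A := hnorm_ge0 _ _; have E0 : 0 <= E := hnorm_ge0 _ _.
have Z0 : 0 <= Z := hnorm_ge0 _ _.
have cross : A ^+ 2 + s ^+ 2 * E ^+ 2 <=
    A * (c1 * s * Z) + s ^+ 2 * ((c2 + 1) * E * Z + c2 * Z ^+ 2).
  have := ler_wpM2l A0 Qh_le; have := ler_wpM2l E0 Qd_le; have := ler_wpM2l Z0 Qd_le.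
  move=> ZQd EQd AQh.
  have sum_le : - (d e q + d z e + d z q) <= (c2 + 1) * E * Z + c2 * Z ^+ 2 by lra.
  have := ler_wpM2l (sqr_ge0 s) sum_le; lra.
have := energy_absorb c20 E0 Z0 cross; rewrite -/kappa => total.
have kappa0 : 0 <= kappa by rewrite /kappa; nra.
split; first by apply: le_of_sqr_le_scale; rewrite ?mulr_ge0 ?(ltW s0) //; nra.
apply: le_of_sqr_le_scale => //; rewrite -(ler_pM2l (exprn_gt0 2 s0)).
by move: total; rewrite exprMn; nra.
Qed.

Lemma infsup_stable (Xh : set X) (cS : R) (u : X -> R) (y yt : Y) : 0 < cS ->
  cS * dual_norm ipX u <= restricted_dual_norm ipX Xh u ->
  (forall xh, Xh xh -> u xh = B y xh) -> (forall x, B yt x = u x) ->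
  hnorm ipY yt <= CB / (cB * cS) * hnorm ipY y.
Proof.
move=> cS_gt0 u_infsup u_def yt_def; case: BP => -[B_blf _] _ _ _ _.
have := restricted_dual_norm_le ipXP.1 (B_blf y) u_def; move: u_infsup.
have <- : B yt = u by apply: funext.
have := ler_wpM2l (ltW cS_gt0) (B_ge yt); have := B_le y.
rewrite mulrAC ler_pdivlMr ?mulr_gt0 //; lra.
Qed.

(* Aubin-Nitsche duality: test [B w] with the solution [x] of the adjoint
   problem [B^* x = (iY w, iY .)], whose approximation error is [O(s)]. *)
Lemma duality_estimate (Xh : set X) (Pi : X -> X) (cPi s : R) (w : Y) :
  0 <= cPi -> 0 <= s ->
  (forall x, Xh (Pi x) /\ forall g, (forall y, B y x = ipHY g (iY y)) ->
     hnorm ipX (x - Pi x) <= cPi * s * hnorm ipHY g) ->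
  (forall xh, Xh xh -> B w xh = 0) ->
  hnorm ipHY (iY w) <= CB * cPi * s * hnorm ipY w.
Proof.
move=> cPi_ge0 s_ge0 Pi_approx Bw0.
have [[B_blf _] _ _ _ _] := BP.
have phi_blf : bounded_linear_functional ipY (fun y => ipHY (iY w) (iY y)).
  split; first by move=> a y1 y2; rewrite iY_lin (ipDr ipHYP) (ipZr ipHYP).
  have [C iY_le] := iY_bounded; exists (hnorm ipHY (iY w) * C) => y.
  apply: le_trans (cauchy_schwarz ipHYP _ _) _.
  by rewrite -mulrA ler_wpM2l ?hnorm_ge0.
have [x Bx] := adjoint_surj ipXP BP phi_blf.
have [XPi Pi_le] := Pi_approx x; have {}Pi_le := Pi_le _ Bx.
have iYw2 : hnorm ipHY (iY w) ^+ 2 = B w (x - Pi x).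
  by rewrite (lfunB (B_blf w).1) (Bw0 _ XPi) subr0 Bx (hnorm_sqr ipHYP).
apply: le_of_sqr_le_mul; rewrite ?hnorm_ge0 ?mulr_ge0 ?hnorm_ge0 // iYw2.
apply: le_trans (ler_norm _) _; apply: le_trans (ler_dual_norm ipXP.1 (B_blf w) _) _.
have := ler_pM (dual_norm_ge0 ipXP.1 (B_blf w)) (hnorm_ge0 _ _) (B_le w) Pi_le.
by move/le_trans; apply; lra.
Qed.

Section UniformBounds.
Variables (cS cPi c1 c2 : R).
Hypotheses (cS_gt0 : 0 < cS) (cPi_ge0 : 0 <= cPi) (c2_ge0 : 0 <= c2).

Let L := CB * cPi * (CB / (cB * cS) + 1).
Let kappa := c1 ^+ 2 + (c2 + 1) ^+ 2 + 2 * c2.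
Let L_ge0 : 0 <= L.
Proof. by rewrite /L !mulr_ge0 ?addr_ge0 ?divr_ge0 ?mulr_ge0 ?(ltW cB_gt0) ?(ltW cS_gt0). Qed.
Let kappa_ge0 : 0 <= kappa.
Proof. by rewrite /kappa !addr_ge0 ?sqr_ge0 ?mulr_ge0. Qed.

Section Mesh.
Variables (Yh : set Y) (Xh : set X) (P : Y -> Y) (Pi : X -> X) (s : R).
Hypothesis s_gt0 : 0 < s.
Hypothesis P_approx : forall z, Yh (P z) /\
  hnorm ipHY (iY (z - P z)) <= c1 * s * Dnorm d z /\ Dnorm d (z - P z) <= c2 * Dnorm d z.
Hypothesis Pi_approx : forall x, Xh (Pi x) /\ forall g, (forall y, B y x = ipHY g (iY y)) ->
  hnorm ipX (x - Pi x) <= cPi * s * hnorm ipHY g.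
Variables (ybar : HY) (y yt : Y) (u : X -> R).
Hypothesis y_gal : galerkin_solution Yh (s ^+ 2) ybar y.
Hypothesis u_infsup : cS * dual_norm ipX u <= restricted_dual_norm ipX Xh u.
Hypothesis u_def : forall xh, Xh xh -> u xh = B y xh.
Hypothesis yt_def : forall x, B yt x = u x.

Lemma perturbation_le : hnorm ipHY (iY yt - iY y) <= L * s * hnorm ipY y.
Proof.
have Bw0 xh : Xh xh -> B (yt - y) xh = 0.
  case: BP => -[_ B_lin] _ _ _ _ /u_def uB.
  by rewrite (lfunB (fun a y1 y2 => B_lin a y1 y2 xh)) yt_def uB subrr.
rewrite -iYB; apply: le_trans (duality_estimate cPi_ge0 (ltW s_gt0) Pi_approx Bw0) _.
have := infsup_stable cS_gt0 u_infsup u_def yt_def; have := hnormB ipYP yt y.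
have := mulr_ge0 (mulr_ge0 CB_ge0 cPi_ge0) (ltW s_gt0).
rewrite /L; set K := CB / (cB * cS); nra.
Qed.

Lemma error_stable : hnorm ipHY (iY yt - ybar) <= (L * (ce^-1 + 1) + 2) * hnorm ipHY ybar.
Proof.
have [iYy_le sd_le] := galerkin_stable (ltW (exprn_gt0 2 s_gt0)) y_gal.
have sD_le : s * Dnorm d y <= hnorm ipHY ybar.
  rewrite -(ler_pXn2r (n := 2)) ?nnegrE ?mulr_ge0 ?hnorm_ge0 ?sqrtr_ge0 ?(ltW s_gt0) //.
  by rewrite exprMn -[Dnorm d y]/(hnorm d y) (hnorm_sqr dP).
have sY_le : s * hnorm ipY y <= (ce^-1 + 1) * hnorm ipHY ybar.
  apply: le_trans (ler_wpM2l (ltW s_gt0) (hnorm_le_Dnorm y)) _.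
  by rewrite mulrCA ler_wpM2l ?addr_ge0 ?invr_ge0 ?(ltW ce_gt0).
have -> : iY yt - ybar = (iY yt - iY y) + (iY y - ybar) by rewrite addrA subrK.
apply: le_trans (hnormD ipHYP _ _) _; apply: le_trans (lerD perturbation_le (hnormB ipHYP _ _)) _.
have := ler_wpM2l L_ge0 sY_le; lra.
Qed.

Lemma error_rate z : ybar = iY z ->
  hnorm ipHY (iY yt - ybar) <=
    (L * (ce^-1 + 1) * (kappa + 2) + kappa + 1) * (Cd + 1) * s * hnorm ipY z.
Proof.
move=> ybar_z; have z_gal : galerkin_solution Yh (s ^+ 2) (iY z) y by rewrite -ybar_z.
have [YPz [Pz_H Pz_D]] := P_approx z.
have [e_H e_D] := galerkin_error s_gt0 c2_ge0 z_gal YPz Pz_H Pz_D; rewrite -/kappa in e_H e_D.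
have yD_le : Dnorm d y <= (kappa + 2) * Dnorm d z.
  have -> : y = (y - z) + z by rewrite subrK.
  by apply: le_trans (hnormD dP _ _) _; move: e_D; rewrite /Dnorm /hnorm; lra.
have yY_le : hnorm ipY y <= (ce^-1 + 1) * ((kappa + 2) * Dnorm d z).
  by apply: le_trans (hnorm_le_Dnorm y) _; rewrite ler_wpM2l ?addr_ge0 ?invr_ge0 ?(ltW ce_gt0).
have Ls0 : 0 <= L * s by rewrite mulr_ge0 ?(ltW s_gt0).
set M := L * (ce^-1 + 1) * (kappa + 2) + kappa + 1.
have M0 : 0 <= M.
  rewrite /M; apply: addr_ge0 => //; apply: addr_ge0 => //; apply: mulr_ge0; last by rewrite addr_ge0.
  by rewrite mulr_ge0 // addr_ge0 // invr_ge0 ltW.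
have err_le : hnorm ipHY (iY yt - ybar) <= M * s * Dnorm d z.
  have -> : iY yt - ybar = (iY yt - iY y) + iY (y - z) by rewrite ybar_z iYB addrA subrK.
  apply: le_trans (hnormD ipHYP _ _) _.
  have := le_trans perturbation_le (ler_wpM2l Ls0 yY_le); rewrite /M; lra.
apply: le_trans err_le _.
have := ler_wpM2l (mulr_ge0 M0 (ltW s_gt0)) (Dnorm_le_hnorm z); lra.
Qed.

End Mesh.

Lemma uniform_error_estimates : exists2 c, 0 < c &
  forall (Yh : set Y) (Xh : set X) (P : Y -> Y) (Pi : X -> X) (s : R)
         (ybar : HY) (y yt : Y) (u : X -> R),
  0 < s ->
  (forall z, Yh (P z) /\ hnorm ipHY (iY (z - P z)) <= c1 * s * Dnorm d z /\
             Dnorm d (z - P z) <= c2 * Dnorm d z) ->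
  (forall x, Xh (Pi x) /\ forall g, (forall y, B y x = ipHY g (iY y)) ->
             hnorm ipX (x - Pi x) <= cPi * s * hnorm ipHY g) ->
  galerkin_solution Yh (s ^+ 2) ybar y ->
  cS * dual_norm ipX u <= restricted_dual_norm ipX Xh u ->
  (forall xh, Xh xh -> u xh = B y xh) -> (forall x, B yt x = u x) ->
  hnorm ipHY (iY yt - ybar) <= c * hnorm ipHY ybar /\
  forall z, ybar = iY z -> hnorm ipHY (iY yt - ybar) <= c * s * hnorm ipY z.
Proof.
have ce1 : 0 <= ce^-1 + 1 by rewrite addr_ge0 // invr_ge0 ltW.
set c_stab := L * (ce^-1 + 1) + 2.
set c_rate := (L * (ce^-1 + 1) * (kappa + 2) + kappa + 1) * (Cd + 1).
have c_stab_gt0 : 0 < c_stab.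
  by rewrite /c_stab; apply: ltr_wpDl => //; exact: mulr_ge0.
have c_rate_ge0 : 0 <= c_rate.
  rewrite /c_rate; apply: mulr_ge0; last exact: addr_ge0.
  apply: addr_ge0 => //; apply: addr_ge0 => //; apply: mulr_ge0; last exact: addr_ge0.
  exact: mulr_ge0.
have stab_le : c_stab <= c_stab + c_rate by rewrite lerDl.
have rate_le : c_rate <= c_stab + c_rate by rewrite lerDr ltW.
exists (c_stab + c_rate); first exact: lt_le_trans stab_le.
move=> Yh Xh P Pi s ybar y yt u s_gt0 P_approx Pi_approx y_gal u_infsup u_def yt_def.
split=> [|z ybar_z].
  apply: le_trans (error_stable s_gt0 Pi_approx y_gal u_infsup u_def yt_def) _.
  by apply: ler_wpM2r; first exact: hnorm_ge0.
apply: le_trans (error_rate s_gt0 P_approx Pi_approx y_gal u_infsup u_def yt_def ybar_z) _.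
apply: ler_wpM2r; first exact: hnorm_ge0.
by apply: ler_wpM2r; first exact: ltW.
Qed.

End UniformBounds.
End ErrorAnalysis.

Theorem mainTheorem5 (R : realType)
  (X HX Y HY : lmodType R)
  (ipX : X -> X -> R) (ipHX : HX -> HX -> R) (iX : X -> HX)
  (ipY : Y -> Y -> R) (ipHY : HY -> HY -> R) (iY : Y -> HY)
  (B : Y -> X -> R) (d : Y -> Y -> R)
  (h0 alpha c1 c2 cS cPi : R)
  (Yh : R -> set Y) (Ph : R -> Y -> Y)
  (Uh : R -> set (X -> R)) (Xh : R -> set X) (Pih : R -> X -> X) :
  gelfand_triple ipX ipHX iX ->
  gelfand_triple ipY ipHY iY ->
  bounded_iso_to_dual ipY ipX B ->
  sym_elliptic_form ipY d ->
  0 < h0 -> 0 < alpha -> 0 < c1 -> 0 < c2 -> 0 < cS -> 0 < cPi ->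
  (forall h, 0 < h <= h0 ->
     (exists n, subspace_dim (Yh h) n) /\
     forall y, Yh h (Ph h y) /\
       hnorm ipHY (iY (y - Ph h y)) <= c1 * h `^ alpha * Dnorm d y /\
       Dnorm d (y - Ph h y) <= c2 * Dnorm d y) ->
  (forall h, 0 < h <= h0 ->
     [/\ (forall u, Uh h u -> bounded_linear_functional ipX u),
         (exists n, fun_subspace_dim (Uh h) n /\ subspace_dim (Xh h) n) &
         (forall u, Uh h u ->
            cS * dual_norm ipX u <=
            sup [set r | exists xh, Xh h xh /\ xh != 0 /\
                                    r = u xh / hnorm ipX xh])]) ->
  (forall h, 0 < h <= h0 -> forall x,
     Xh h (Pih h x) /\
     forall g : HY, (forall y, B y x = ipHY g (iY y)) ->
       hnorm ipX (x - Pih h x) <= cPi * h `^ alpha * hnorm ipHY g) ->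
  exists c : R, 0 < c /\
    forall h, 0 < h <= h0 ->
    forall (ybar : HY) (yrh : Y) (ut : X -> R) (yt : Y),
      let rho := h `^ (2 * alpha) in
      (* Galerkin solution y_{rho h} *)
      Yh h yrh ->
      (forall yh, Yh h yh ->
         ipHY (iY yrh) (iY yh) + rho * d yrh yh = ipHY ybar (iY yh)) ->
      (* u~_{rho h} in U_h *)
      Uh h ut ->
      (forall xh, Xh h xh -> ut xh = B yrh xh) ->
      (* y~_rho = B^{-1} u~_{rho h} *)
      (forall x, B yt x = ut x) ->
      hnorm ipHY (iY yt - ybar) <= c * hnorm ipHY ybar /\
      (forall z : Y, ybar = iY z ->
         hnorm ipHY (iY yt - ybar) <= c * h `^ alpha * hnorm ipY z).
Proof.
move=> [[ipXP _] _ _ _ _] [[[ipYP _] [ipHYP _]] iY_lin _ iY_bounded _] BP dF.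
move=> _ _ _ c2_gt0 cS_gt0 cPi_gt0 Yh_approx Xh_infsup Pi_approx.
have dP := sym_elliptic_inner_product ipYP dF.
have [Cd Cd_ge0 d_le] := sym_elliptic_bound dF.
have [_ _ _ [ce [ce_gt0 d_ge]]] := dF.
have [_ B_bounded [cB [cB_gt0 B_ge]] _ _] := BP.
have [CB CB_ge0 B_le] := nonneg_bound (hnorm_ge0 ipY) B_bounded.
have [c c_gt0 estimates] := uniform_error_estimates ipXP ipYP ipHYP dP iY_lin iY_bounded BP
  CB_ge0 cB_gt0 Cd_ge0 ce_gt0 B_le B_ge d_le d_ge c1 cS_gt0 (ltW cPi_gt0) (ltW c2_gt0).
exists c; split => // h h_range ybar y u yt rho Yh_y y_gal Uh_u u_def yt_def.
have h_gt0 : 0 < h by case/andP: h_range.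
have rhoE : rho = h `^ alpha ^+ 2.
  by rewrite /rho mulrC powRrM powR_mulrn ?powR_ge0 // ltW.
have [_ Ph_approx] := Yh_approx h h_range; have [_ _ infsup] := Xh_infsup h h_range.
apply: estimates Ph_approx (Pi_approx h h_range) _ (infsup _ Uh_u) u_def yt_def.
  by rewrite powR_gt0.
by split=> // yh /y_gal; rewrite rhoE.
Qed.
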